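(* For all teams $T,S$ the following are equivalent: (1) $T\equiv_{\mathrm{st}}S$; (2) for all teams $T_1,T_2$ with $T=T_1\cup T_2$ there are teams $S_1,S_2$ with $S=S_1\cup S_2$, $T_1\equiv_{\mathrm{st}}S_1$ and $T_2\equiv_{\mathrm{st}}S_2$.
   Context: A trace is an infinite sequence $t=t(0)t(1)\cdots$ of subsets of a set $\mathrm{AP}$ of propositions; a team is a set of traces. A stuttering function of a trace $t$ is a strictly increasing function $f:\mathbb N\to\mathbb N$ with $f(0)=0$ such that $t(f(k))=t(f(k)+1)=\cdots=t(f(k+1)-1)$ for all $k\ge0$. A stuttering function of a team $T$ is a function that is a stuttering function of every $t\in T$. For $f:\mathbb N\to\mathbb N$, $t[f]:=t(f(0))t(f(1))t(f(2))\cdots$ and $T[f]:=\{t[f]:t\in T\}$. Teams $T,T'$ are stutter-equivalent ($T\equiv_{\mathrm{st}}T'$) if there are a stuttering function $f$ of $T$ and a stuttering function $f'$ of $T'$ with $T[f]=T'[f']$. *)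

From Stdlib Require Import Arith.

Definition trace (AP : Type) := nat -> (AP -> Prop).
Definition team (AP : Type) := trace AP -> Prop.

Definition stuttering_fun {AP : Type} (t : trace AP) (f : nat -> nat) : Prop :=
  f 0 = 0 /\
  (forall k, f k < f (S k)) /\
  (forall k i, f k <= i < f (S k) -> t i = t (f k)).

Definition stuttering_fun_team {AP : Type} (T : team AP) (f : nat -> nat) : Prop :=
  (forall k, f k < f (S k)) /\ f 0 = 0 /\
  forall t, T t -> stuttering_fun t f.

Definition trace_at {AP : Type} (t : trace AP) (f : nat -> nat) : trace AP :=
  fun k => t (f k).

Definition team_at {AP : Type} (T : team AP) (f : nat -> nat) : team AP :=
  fun u => exists t, T t /\ u = trace_at t f.

Definition team_eq {AP : Type} (T S : team AP) : Prop := forall t, T t <-> S t.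

Definition stutter_equiv {AP : Type} (T T' : team AP) : Prop :=
  exists f f', stuttering_fun_team T f /\ stuttering_fun_team T' f' /\
    team_eq (team_at T f) (team_at T' f').

Definition team_union {AP : Type} (T1 T2 : team AP) : team AP :=
  fun t => T1 t \/ T2 t.


(* (1) => (2).  Fix witnesses f, f' with T[f] = S[f'].  For a subteam U of T
   take the part of S whose f'-samples are f-samples of U,
       matching_part S f' U f := { s ∈ S | s[f'] ∈ U[f] }.
   Stuttering functions restrict to subteams, so U ≡st matching_part S f' U f
   via the same f, f'; and since every s ∈ S has s[f'] ∈ T[f], the matching
   parts of T1 and T2 cover S.
   (2) => (1).  Split T = T ∪ ∅.  The team matched with ∅ must be empty
   (a sample of one of its traces would lie in ∅[g]), so the team matched
   with T is S itself, and stutter-equivalence transfers along team_eq. *)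

Definition team_sub {AP : Type} (U T : team AP) : Prop := forall t, U t -> T t.

Lemma stuttering_fun_team_sub {AP : Type} (U T : team AP) (f : nat -> nat) :
  team_sub U T -> stuttering_fun_team T f -> stuttering_fun_team U f.
Proof. intros HUT [Hmono [H0 Htr]]. split; [exact Hmono | split; [exact H0 | auto]]. Qed.

Lemma stutter_equiv_team_eq_r {AP : Type} (T S S' : team AP) :
  stutter_equiv T S -> team_eq S S' -> stutter_equiv T S'.
Proof.
  intros [f [f' [Hf [Hf' He]]]] HSS'.
  exists f, f'; split; [exact Hf | split].
  - apply (stuttering_fun_team_sub S' S); [intros s Hs; apply HSS'; exact Hs | exact Hf'].
  - intro u; split.
    + intro Hu. destruct (proj1 (He u) Hu) as [s [Hs Hus]].
      exists s; split; [apply HSS'; exact Hs | exact Hus].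
    + intros [s [Hs Hus]]. apply He. exists s; split; [apply HSS'; exact Hs | exact Hus].
Qed.

Lemma stutter_equiv_empty_l {AP : Type} (S : team AP) :
  stutter_equiv (fun _ => False) S -> forall s, ~ S s.
Proof.
  intros [g [g' [_ [_ He]]]] s Hs.
  destruct (proj2 (He (trace_at s g'))) as [t [Ht _]]; [exists s; auto | exact Ht].
Qed.

Definition matching_part {AP : Type} (S : team AP) (f' : nat -> nat)
    (U : team AP) (f : nat -> nat) : team AP :=
  fun s => S s /\ team_at U f (trace_at s f').

Section MatchingPart.
Variable AP : Type.
Variables T S : team AP.
Variables f f' : nat -> nat.
Hypothesis Hf : stuttering_fun_team T f.
Hypothesis Hf' : stuttering_fun_team S f'.
Hypothesis Hsample : team_eq (team_at T f) (team_at S f').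

Lemma stutter_equiv_matching_part (U : team AP) :
  team_sub U T -> stutter_equiv U (matching_part S f' U f).
Proof.
  intros HUT. exists f, f'; split; [|split].
  - exact (stuttering_fun_team_sub U T f HUT Hf).
  - apply (stuttering_fun_team_sub _ S); [intros s [Hs _]; exact Hs | exact Hf'].
  - intro u; split.
    + intros [t [Ht Hut]].
      destruct (proj1 (Hsample u)) as [s [Hs Hus]]; [exists t; auto |].
      exists s; split; [split; [exact Hs | rewrite <- Hus; exists t; auto] | exact Hus].
    + intros [s [[_ Hsu] Hus]]. subst u. exact Hsu.
Qed.

Lemma matching_parts_cover (T1 T2 : team AP) :
  team_eq T (team_union T1 T2) ->
  team_eq S (team_union (matching_part S f' T1 f) (matching_part S f' T2 f)).
Proof.
  intros HT s; split.
  - intro Hs.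
    destruct (proj2 (Hsample (trace_at s f'))) as [t [Ht Hst]]; [exists s; auto |].
    destruct (proj1 (HT t) Ht) as [H1 | H2]; [left | right];
      (split; [exact Hs | exists t; auto]).
  - intros [[Hs _] | [Hs _]]; exact Hs.
Qed.

End MatchingPart.

Theorem mainTheorem7 (AP : Type) (T S : team AP) :
  stutter_equiv T S <->
  (forall T1 T2 : team AP, team_eq T (team_union T1 T2) ->
     exists S1 S2 : team AP, team_eq S (team_union S1 S2) /\
       stutter_equiv T1 S1 /\ stutter_equiv T2 S2).
Proof.
  split.
  - intros [f [f' [Hf [Hf' Hsample]]]] T1 T2 HT.
    exists (matching_part S f' T1 f), (matching_part S f' T2 f).
    split; [exact (matching_parts_cover AP T S f f' Hsample T1 T2 HT) | split];
      apply (stutter_equiv_matching_part AP T S f f' Hf Hf' Hsample);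
      intros t Ht; apply HT; [left | right]; exact Ht.
  - intros Hsplit.
    destruct (Hsplit T (fun _ => False)) as [S1 [S2 [HS [HTS1 HS2]]]];
      [intro t; unfold team_union; tauto |].
    apply (stutter_equiv_team_eq_r T S1 S HTS1).
    intro s; split.
    + intro Hs1. apply HS. left. exact Hs1.
    + intro Hs. destruct (proj1 (HS s) Hs) as [Hs1 | Hs2]; [exact Hs1 |].
      exfalso. exact (stutter_equiv_empty_l S2 HS2 s Hs2).
Qed.
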